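(* Let $X$ be a finite set and let $\mathcal{P}=\{X_1,\ldots,X_m\}$ be an $(m,k)$-partition of $X$ such that, for each $i\in\{1,\ldots,k\}$, $\mathcal{P}$ has exactly $m_i\ge1$ blocks of size $n_i\ge1$. Let $A$ be the set of all $k$-tuples $(t_1,\ldots,t_k)$, where each $t_i=(l_{i,1},\ldots,l_{i,m_i})$ is a sequence of length $m_i$ with entries in $\{n_1,\ldots,n_k\}$, such that the multiset of all entries of $t_1,\ldots,t_k$ together is the multiset containing $n_j$ with multiplicity exactly $m_j$ for each $j\in\{1,\ldots,k\}$. For $(t_1,\ldots,t_k)\in A$ let $s_i=l_{i,1}+\cdots+l_{i,m_i}$ be the sum of the entries of $t_i$. Then \[|\Sigma(X,\mathcal{P})|=m_1!\,m_2!\cdots m_k!\sum_{(t_1,\ldots,t_k)\in A} n_1^{\,s_1}n_2^{\,s_2}\cdots n_k^{\,s_k}.\]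
   Context: An $(m,k)$-partition is a partition with exactly $m$ blocks having exactly $k$ distinct block sizes (here $n_1,\ldots,n_k$ are the distinct block sizes). $T(X,\mathcal{P})$ is the semigroup of all maps $f\colon X\to X$ such that every block of $\mathcal{P}$ is mapped by $f$ into some block of $\mathcal{P}$, and $\Sigma(X,\mathcal{P})=\{f\in T(X,\mathcal{P})\mid Xf\cap B\neq\emptyset\text{ for every block } B \text{ of } \mathcal{P}\}$. *)

From mathcomp Require Import all_boot.
Set Implicit Arguments. Unset Strict Implicit. Unset Printing Implicit Defensive.

Definition in_TXP (T : finType) (P : {set {set T}}) (f : {ffun T -> T}) : bool :=
  [forall B in P, [exists C in P, (f @: B) \subset C]].

Definition in_SigmaXP (T : finType) (P : {set {set T}}) (f : {ffun T -> T}) : bool :=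
  in_TXP P f && [forall B in P, (f @: [set: T]) :&: B != set0].

Definition SigmaXP (T : finType) (P : {set {set T}}) : {set {ffun T -> T}} :=
  [set f | in_SigmaXP P f].

(* The index set A: k-tuples (t_1,...,t_k), t_i of length m_i, with entries
   natural numbers (represented in 'I_N, N = 1 + max n_j, which contains all
   n_j), all entries in {n_1,...,n_k}, and total multiplicity of n_j equal m_j. *)
Definition bound (k : nat) (n : 'I_k -> nat) : nat := (\max_(i < k) n i).+1.

Definition Atype (k : nat) (n : 'I_k -> nat) (mult : 'I_k -> nat) :=
  {dffun forall i : 'I_k, (mult i).-tuple 'I_(bound n)}.

Definition in_A (k : nat) (n : 'I_k -> nat) (mult : 'I_k -> nat)
  (t : Atype n mult) : bool :=
  [forall i, all (fun x : 'I_(bound n) => [exists j, nat_of_ord x == n j]) (t i)]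
  && [forall j, \sum_(i < k) count (fun x : 'I_(bound n) => nat_of_ord x == n j) (t i)
                == mult j].

Definition s_of (k : nat) (n : 'I_k -> nat) (mult : 'I_k -> nat)
  (t : Atype n mult) (i : 'I_k) : nat := \sum_(x <- t i) nat_of_ord x.

(* A map f in Sigma(X,P) sends each block into a block, and since Xf meets every
   block the induced map on blocks is onto, hence a permutation phi of the blocks;
   for a fixed phi there are prod_B |B|^|phi^-1 B| such maps.  Label the blocks of
   size n_i by pairs (i,j), j < m_i, and colour each block b by the size class of
   phi^-1 b.  A colouring with the right class sizes comes from exactly
   m_1! ... m_k! permutations (a coset of the class-preserving ones), and read block
   by block it is a tuple of A: l_(i,j) is the size of the block mapped onto (i,j). *)

From mathcomp Require Import all_boot fingroup perm.
Set Implicit Arguments. Unset Strict Implicit. Unset Printing Implicit Defensive.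

Section IndexedPartition.

Variables (T I : finType) (P : {set {set T}}) (E : I -> {set T}).
Hypotheses (partP : partition P [set: T]) (E_in : forall a, E a \in P)
  (E_inj : injective E) (E_onto : forall B, B \in P -> exists a, E a = B).

Lemma block_neq0 a : E a != set0.
Proof. by case/and3P: partP => _ _; apply: contraNneq => <-. Qed.

Lemma block_uniq x a b : x \in E a -> x \in E b -> a = b.
Proof.
move=> xa xb; case/and3P: partP => _ /trivIsetP tP _.
have [/E_inj // | neqE] := eqVneq (E a) (E b).
by rewrite (disjointFr (tP _ _ (E_in a) (E_in b) neqE) xa) in xb.
Qed.

Lemma block_cover x : exists a, x \in E a.
Proof.
case/and3P: partP => /eqP coverP _ _.
have : x \in cover P by rewrite coverP inE.
by case/bigcupP => B /E_onto [a <-] xB; exists a.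
Qed.

Definition perm_maps (phi : {perm I}) : {set {ffun T -> T}} :=
  [set f : {ffun T -> T} | [forall a, f @: E a \subset E (phi a)]].

Lemma perm_maps_Sigma phi (f : {ffun T -> T}) : f \in perm_maps phi -> in_SigmaXP P f.
Proof.
rewrite inE => /forallP fphi; apply/andP; split.
  apply/forall_inP => _ /E_onto [a <-].
  by apply/existsP; exists (E (phi a)); rewrite E_in fphi.
apply/forall_inP => _ /E_onto [b <-].
have /set0Pn [x xa] := block_neq0 ((phi^-1)%g b).
apply/set0Pn; exists (f x); rewrite inE imset_f ?inE //=.
by rewrite -[b](permKV phi) (subsetP (fphi _)) ?imset_f.
Qed.

Lemma perm_maps_uniq phi psi (f : {ffun T -> T}) :
  f \in perm_maps phi -> f \in perm_maps psi -> phi = psi.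
Proof.
rewrite !inE => /forallP fphi /forallP fpsi; apply/permP => a.
have /set0Pn [x xa] := block_neq0 a.
by apply: (@block_uniq (f x)); [apply: (subsetP (fphi a)) | apply: (subsetP (fpsi a))];
  rewrite imset_f.
Qed.

(* The block map of f is onto since Xf meets every block, hence a permutation. *)
Lemma Sigma_perm_maps (f : {ffun T -> T}) :
  in_SigmaXP P f -> exists phi, f \in perm_maps phi.
Proof.
case/andP => /forall_inP fT /forall_inP fSigma.
pose beta a := odflt a [pick b | f @: E a \subset E b].
have beta_sub a : f @: E a \subset E (beta a).
  rewrite /beta; case: pickP => [b //|none] /=.
  have /existsP [_ /andP [/E_onto [b <-] sub]] := fT _ (E_in a).
  by have := none b; rewrite sub.
have beta_onto b : b \in codom beta.
  have /set0Pn [_ /setIP [/imsetP [x _ ->] fxb]] := fSigma _ (E_in b).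
  have [a xa] := block_cover x.
  by rewrite (block_uniq fxb (subsetP (beta_sub a) _ (imset_f f xa))) codom_f.
have beta_inj : {in I &, injective beta}.
  by apply/image_injP/eqP; apply: eq_card => b; rewrite beta_onto.
by exists (perm (in2T beta_inj)); rewrite inE; apply/forallP => a; rewrite permE.
Qed.

Lemma card_SigmaXP : #|SigmaXP P| = \sum_(phi : {perm I}) #|perm_maps phi|.
Proof.
under [RHS]eq_bigr do rewrite -sum1_card.
rewrite (exchange_big_dep (in_SigmaXP P)) => [|phi f _]; last exact: perm_maps_Sigma.
rewrite -sum1dep_card; apply: eq_bigr => f /Sigma_perm_maps [phi fphi].
rewrite (big_pred1 phi) // => psi /=.
by apply/idP/eqP => [/perm_maps_uniq/(_ fphi) | ->].
Qed.

Lemma card_perm_maps phi :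
  #|perm_maps phi| = \prod_b #|E b| ^ #|E ((phi^-1)%g b)|.
Proof.
pose S x := [set y | [exists a, (x \in E a) && (y \in E (phi a))]].
have SE x a : x \in E a -> S x = E (phi a).
  move=> xa; apply/setP => y; rewrite inE.
  apply/existsP/idP => [[a' /andP [xa' ya']] | ya]; last by exists a; rewrite xa.
  by rewrite (block_uniq xa xa').
have -> : perm_maps phi = [set f in family (fun x => mem (S x))].
  apply/setP => f; rewrite !inE; apply/forallP/familyP => [fphi x | fS a].
    have [a xa] := block_cover x; rewrite /= (SE x a xa).
    exact: (subsetP (fphi a) _ (imset_f f xa)).
  by apply/subsetP => _ /imsetP [x xa ->]; have := fS x; rewrite /= (SE x a xa).
rewrite cardsE card_family foldrE big_image /=.
have [/eqP coverP trivP _] := and3P partP.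
rewrite (eq_bigl [in cover P]); last by move=> x; rewrite coverP !inE.
rewrite big_trivIset //.
have -> : P = E @: [set: I].
  apply/setP => B; apply/idP/imsetP => [/E_onto [a <-] | [a _ ->]]; last exact: E_in.
  by exists a.
rewrite big_imset /=; last by move=> a b _ _ /E_inj.
rewrite [RHS](reindex_inj (@perm_inj _ phi)).
apply: eq_big => [a|a _]; first by rewrite !inE.
rewrite permK -prod_nat_const; apply: eq_bigr => x xa.
by rewrite (SE x a xa).
Qed.

End IndexedPartition.

Section Recolouring.

Variables (I K : finType) (c : I -> K).

Definition recolour (phi : {perm I}) : {ffun I -> K} := [ffun x => c (phi x)].

Lemma recolourE phi x : recolour phi x = c (phi x).
Proof. exact: ffunE. Qed.

Definition same_fibres (u : I -> K) : bool :=
  [forall r, #|[set x | u x == r]| == #|[set x | c x == r]|].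

Lemma same_fibres_recolour phi : same_fibres (recolour phi).
Proof.
apply/forallP => r; rewrite -(card_imset _ (@perm_inj _ phi)).
apply/eqP; apply/eq_card => y.
apply/imsetP/idP => [[x + ->] | ]; first by rewrite !inE recolourE.
by rewrite inE => cy; exists ((phi^-1)%g y); rewrite ?inE ?recolourE permKV.
Qed.

(* Map the j-th element of the u-fibre of r to the j-th element of its c-fibre. *)
Lemma exists_recolour u : same_fibres u -> exists phi, recolour phi = finfun u.
Proof.
move=> /forallP same_u; pose fib (v : I -> K) r := enum [set x | v x == r].
pose phi0 x := nth x (fib c (u x)) (index x (fib u (u x))).
have index_lt x : index x (fib u (u x)) < size (fib c (u x)).
  by rewrite -cardE -(eqP (same_u _)) cardE index_mem mem_enum inE.
have phi0_fib x : phi0 x \in fib c (u x) by apply: mem_nth.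
have phi0_col x : c (phi0 x) = u x by move: (phi0_fib x); rewrite mem_enum inE => /eqP.
have phi0_inj : injective phi0.
  move=> x y eq_xy; have eq_u : u x = u y by rewrite -!phi0_col eq_xy.
  have index_phi0 z : index (phi0 z) (fib c (u z)) = index z (fib u (u z)).
    by rewrite index_uniq ?enum_uniq.
  have fib_u z : z \in fib u (u z) by rewrite mem_enum inE.
  apply: (@index_inj _ x (fib u (u x))); first exact: fib_u.
    by rewrite eq_u fib_u.
  by rewrite -index_phi0 eq_xy eq_u index_phi0.
by exists (perm phi0_inj); apply/ffunP => x; rewrite recolourE ffunE permE phi0_col.
Qed.

(* The solutions of [recolour phi = u] form a coset of the stabiliser of c. *)
Lemma card_recolour_fibre u :
  same_fibres u ->
  #|[set phi | recolour phi == finfun u]| = #|[set phi | recolour phi == finfun c]|.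
Proof.
case/exists_recolour => phi0 phi0_u; rewrite -[RHS](card_imset _ (mulgI phi0)).
apply/eq_card => phi; rewrite inE -phi0_u; apply/eqP/imsetP => [|[psi]].
  move/ffunP => phi_col; exists (phi0^-1 * phi)%g; last by rewrite mulKVg.
  rewrite inE; apply/eqP/ffunP => x; rewrite !ffunE permM.
  by have := phi_col ((phi0^-1)%g x); rewrite !ffunE permKV.
rewrite inE => /eqP/ffunP psi_stab ->; apply/ffunP => x; rewrite !ffunE permM.
by have := psi_stab (phi0 x); rewrite !ffunE.
Qed.

Lemma sum_perm_recolour (F : I -> K -> nat) :
  \sum_(phi : {perm I}) \prod_x F x (c (phi x)) =
  #|[set phi | recolour phi == finfun c]| *
    \sum_(u : {ffun I -> K} | same_fibres u) \prod_x F x (u x).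
Proof.
rewrite (partition_big recolour same_fibres) => [|phi _]; last first.
  exact: same_fibres_recolour.
rewrite big_distrr /=; apply: eq_bigr => u same_u.
rewrite (eq_bigr (fun=> \prod_x F x (u x))) => [|phi /eqP <-]; last first.
  by apply: eq_bigr => x _; rewrite ffunE.
rewrite sum_nat_cond_const -(card_recolour_fibre same_u) ffunK.
by congr (#|_| * _); apply/setP => phi; rewrite !inE.
Qed.

End Recolouring.

Section TaggedBlocks.

Variables (k : nat) (mult : 'I_k -> nat).

Local Notation blocks := {i : 'I_k & 'I_(mult i)}.
Local Notation Block := (Tagged (fun i => 'I_(mult i))).

Lemma Block_inj i : injective (fun j : 'I_(mult i) => Block j).
Proof. exact: eq_from_Tagged. Qed.

Lemma big_blocks (R : Type) (idx : R) (op : Monoid.com_law idx) (F : blocks -> R) :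
  \big[op/idx]_(b : blocks) F b =
  \big[op/idx]_(i < k) \big[op/idx]_(j < mult i) F (Block j).
Proof.
rewrite (sig_big_dep (op := op) xpredT (fun _ _ => true) (fun i j => F (Block j))) /=.
by apply: eq_bigr => -[].
Qed.

Lemma card_tag_fibre r : #|[set a : blocks | tag a == r]| = mult r.
Proof.
rewrite -[RHS]card_ord -[RHS]cardsT -[RHS](card_imset _ (@Block_inj r)).
apply: eq_card => a; rewrite inE; apply/eqP/imsetP => [tag_a | [j _ ->]] //.
by exists (etagged tag_a); rewrite ?inE ?etaggedK.
Qed.

Lemma card_tag_stab :
  #|[set phi : {perm blocks} | recolour tag phi == finfun tag]| =
  \prod_(i < k) (mult i)`!.
Proof.
pose lift (psi : {dffun forall i, {perm 'I_(mult i)}}) (a : blocks) :=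
  Block (psi (tag a) (tagged a)).
have lift_inj psi : injective (lift psi).
  move=> [i j] [i' j'] /= eq_lift; have /= eq_i := congr1 tag eq_lift; subst i'.
  by move: eq_lift => /Block_inj /perm_inj /= ->.
have perm_lift_inj : injective (fun psi => perm (lift_inj psi)).
  move=> psi psi' /permP eq_psi; apply/ffunP => i; apply/permP => j.
  by have := eq_psi (Block j); rewrite !permE => /Block_inj.
have -> : [set phi : {perm blocks} | recolour tag phi == finfun tag] =
          (fun psi => perm (lift_inj psi)) @: setT.
  apply/setP => phi; rewrite inE; apply/eqP/imsetP => [/ffunP stab_phi | [psi _ ->]].
    have tag_phi a : tag (phi a) = tag a by have := stab_phi a; rewrite !ffunE.
    pose psi i (j : 'I_(mult i)) : 'I_(mult i) := etagged (tag_phi (Block j)).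
    have psi_inj i : injective (psi i).
      move=> j j' /(congr1 Block); rewrite !etaggedK.
      by move/perm_inj/Block_inj.
    exists [ffun i => perm (psi_inj i)] => //.
    by apply/permP => -[i j]; rewrite !permE /lift ffunE permE etaggedK.
  by apply/ffunP => a; rewrite !ffunE permE.
rewrite card_imset // cardsT card_dep_ffun foldrE big_image.
by apply: eq_bigr => i _; rewrite card_Sn.
Qed.

Variable n : 'I_k -> nat.
Hypothesis n_inj : injective n.

Definition size_tuples (u : {ffun blocks -> 'I_k}) : Atype n mult :=
  [ffun i => [tuple (inord (n (u (Block j))) : 'I_(bound n)) | j < mult i]].

Definition size_colouring (t : Atype n mult) : {ffun blocks -> 'I_k} :=
  [ffun b => odflt (tag b) [pick r | n r == tnth (t (tag b)) (tagged b)]].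

Lemma tnth_size_tuples u i j : tnth (size_tuples u i) j = n (u (Block j)) :> nat.
Proof. by rewrite ffunE tnth_mktuple inordK // ltnS (leq_bigmax (u (Block j))). Qed.

Lemma size_tuplesK : cancel size_tuples size_colouring.
Proof.
move=> u; apply/ffunP => -[i j]; rewrite ffunE /=.
case: pickP => [r | /(_ (u (Block j)))]; last by rewrite tnth_size_tuples eqxx.
by rewrite tnth_size_tuples => /eqP /n_inj.
Qed.

Lemma size_colouringK t : in_A t -> size_tuples (size_colouring t) = t.
Proof.
case/andP => /forallP t_sizes _; apply/ffunP => i; apply: eq_from_tnth => j.
apply: val_inj; rewrite /= tnth_size_tuples ffunE /=.
case: pickP => [r /eqP // | none].
have /existsP [r /eqP t_ij] := allP (t_sizes i) _ (mem_tnth j (t i)).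
by have := none r; rewrite t_ij eqxx.
Qed.

Lemma count_size_tuples u r :
  \sum_(i < k) count (fun x : 'I_(bound n) => nat_of_ord x == n r) (size_tuples u i) =
  #|[set b | u b == r]|.
Proof.
rewrite -sum1dep_card [RHS]big_mkcond big_blocks; apply: eq_bigr => i _.
rewrite -sum1_count big_tuple big_mkcond /=.
by apply: eq_bigr => j _; rewrite tnth_size_tuples (inj_eq n_inj).
Qed.

Lemma in_A_size_tuples u : in_A (size_tuples u) = same_fibres tag u.
Proof.
rewrite /in_A /same_fibres; have -> /= : [forall i, all (fun x : 'I_(bound n) =>
    [exists r, nat_of_ord x == n r]) (size_tuples u i)].
  apply/forallP => i; apply/allP => _ /tnthP [j ->]; apply/existsP.
  by exists (u (Block j)); rewrite tnth_size_tuples.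
by apply: eq_forallb => r; rewrite count_size_tuples card_tag_fibre.
Qed.

Lemma sum_size_tuples :
  \sum_(u : {ffun blocks -> 'I_k} | same_fibres tag u) \prod_b n (tag b) ^ n (u b) =
  \sum_(t : Atype n mult | in_A t) \prod_(i < k) n i ^ s_of t i.
Proof.
rewrite [RHS](reindex_onto size_tuples size_colouring size_colouringK).
apply: eq_big => [u | u _]; first by rewrite in_A_size_tuples size_tuplesK eqxx andbT.
rewrite big_blocks; apply: eq_bigr => i _; rewrite /s_of expn_sum big_tuple.
by apply: eq_bigr => j _; rewrite tnth_size_tuples.
Qed.

Lemma exists_block_labelling (T : finType) (P : {set {set T}}) :
  (forall B, B \in P -> exists i, #|B| = n i) ->
  (forall i, #|[set B in P | #|B| == n i]| = mult i) ->
  exists E : blocks -> {set T},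
    [/\ forall b, E b \in P, forall b, #|E b| = n (tag b), injective E
      & forall B, B \in P -> exists b, E b = B].
Proof.
move=> sizes_P card_class.
pose class i := enum [set B in P | #|B| == n i].
have size_class i : size (class i) = mult i by rewrite -cardE card_class.
pose E (b : blocks) := nth set0 (class (tag b)) (tagged b).
have E_class b : E b \in [set B in P | #|B| == n (tag b)].
  by rewrite -mem_enum mem_nth // size_class.
have E_in b : E b \in P by have := E_class b; rewrite inE => /andP [].
have E_card b : #|E b| = n (tag b) by have := E_class b; rewrite inE => /andP [_ /eqP].
exists E; split=> // [[i j] [i' j'] eq_E | B PB].
  have /= eq_i : i = i' by apply: n_inj; rewrite -(E_card (Block j)) eq_E E_card.
  subst i'; move/eqP: eq_E; rewrite /E /= nth_uniq ?size_class ?enum_uniq //.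
  by move=> /eqP /val_inj ->.
have [i B_size] := sizes_P B PB.
have B_class : B \in class i by rewrite mem_enum inE PB B_size eqxx.
have idx_lt : index B (class i) < mult i by rewrite -size_class index_mem.
by exists (Block (Ordinal idx_lt)); rewrite /E /= nth_index.
Qed.

End TaggedBlocks.

Theorem theorem6p3 (T : finType) (P : {set {set T}}) (k : nat)
  (n mult : 'I_k -> nat)
  (hP : partition P [set: T])
  (hn_inj : injective n)
  (hn_pos : forall i, 1 <= n i)
  (hm_pos : forall i, 1 <= mult i)
  (hsizes : forall B, B \in P -> exists i, #|B| = n i)
  (hmult : forall i, #|[set B in P | #|B| == n i]| = mult i) :
  #|SigmaXP P| =
    (\prod_(i < k) (mult i)`!) *
    \sum_(t : Atype n mult | in_A t) \prod_(i < k) n i ^ s_of t i.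
Proof.
have [E [E_in E_card E_inj E_onto]] := exists_block_labelling hn_inj hsizes hmult.
rewrite (card_SigmaXP hP E_in E_inj E_onto) (reindex_inj invg_inj) /=.
under eq_bigr do rewrite (card_perm_maps hP E_in E_inj E_onto) invgK.
under eq_bigr do under eq_bigr do rewrite !E_card.
rewrite (sum_perm_recolour tag (fun b r => n (tag b) ^ n r)).
by rewrite card_tag_stab sum_size_tuples.
Qed.
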